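(* Let $X$ be a separable Banach space over $\mathbb{K}\in\{\mathbb{R},\mathbb{C}\}$ and $T\colon X\to X$ a bounded linear operator. If there exists a uniformly Li-Yorke scrambled subset of $X$ which is locally residual, then the whole space $X$ is uniformly Li-Yorke scrambled for $T$.
   Context: A subset $S\subset X$ with at least two points is uniformly Li-Yorke scrambled for $T$ if there exist sequences $\{p_n\}$, $\{q_n\}$ in $\mathbb{N}$ such that for all distinct $x,y\in S$: $\lim_n\|T^{p_n}x-T^{p_n}y\|=0$ and $\lim_n\|T^{q_n}x-T^{q_n}y\|=\infty$. A subset $A\subset X$ is locally residual if there is a nonempty open $U\subset X$ such that $A\cap U$ is residual in $U$ (contains a dense $G_\delta$ subset of $U$). *)

From HB Require Import structures.
From mathcomp Require Import all_boot all_order all_algebra.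
From mathcomp Require Import all_classical all_reals all_analysis.
From mathcomp Require Import complex.
Set Implicit Arguments. Unset Strict Implicit. Unset Printing Implicit Defensive.
Import Order.TTheory GRing.Theory Num.Theory.
Import numFieldNormedType.Exports.
Local Open Scope classical_set_scope.
Local Open Scope ring_scope.

Definition separable_space (X : topologicalType) : Prop :=
  exists D : set X, countable D /\ closure D = setT.

Definition Gdelta_set (X : topologicalType) (G : set X) : Prop :=
  exists F : nat -> set X, (forall n, open (F n)) /\ G = \bigcap_n F n.

Definition locally_residual (X : topologicalType) (A : set X) : Prop :=
  exists U : set X, open U /\ U !=set0 /\
    exists G : set X, G `<=` A `&` U /\ Gdelta_set G /\ U `<=` closure G.

Definition uniformly_LiYorke_scrambled (K : numFieldType) (X : normedModType K)
    (T : X -> X) (S : set X) : Prop :=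
  (exists x y, S x /\ S y /\ x <> y) /\
  exists p q : nat -> nat, forall x y, S x -> S y -> x <> y ->
    ((fun n => `|iter (p n) T x - iter (p n) T y|) @ \oo --> (0 : K)) /\
    ((fun n => `|iter (q n) T x - iter (q n) T y|) @ \oo --> +oo).

From HB Require Import structures.
From mathcomp Require Import all_boot all_order all_algebra.
From mathcomp Require Import all_classical all_reals all_analysis.
From mathcomp Require Import complex.
Import Order.TTheory GRing.Theory Num.Theory.
Import numFieldNormedType.Exports.
Local Open Scope classical_set_scope.
Local Open Scope ring_scope.

(* Given z <> 0, the locally residual set S contains a dense G_delta set G of
   some ball V. For w a small multiple of z, both G and G + w are residual in a
   smaller ball, so by Baire's theorem they meet: this gives a, a - w in S, and
   z is a multiple of their difference. By linearity, whenever u - v = c (a - b),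
   the orbit distances of u, v are |c| times those of a, b, so the sequences
   witnessing that S is uniformly scrambled work for every pair of X. *)

Section nested_balls.
Context {K : numFieldType} {T : completePseudoMetricType K}.
Variables (a : nat -> T) (r : nat -> K).
Hypothesis r_gt0 : forall n, 0 < r n.
Hypothesis r_small : forall e : K, 0 < e -> exists n, r n < e.
Hypothesis ball_nested_step :
  forall n, ball (a n.+1) (r n.+1 + r n.+1) `<=` ball (a n) (r n).

Lemma ball_nested n m : (n <= m)%N -> ball (a m) (r m) `<=` ball (a n) (r n).
Proof.
elim: m => [|m IHm]; first by rewrite leqn0 => /eqP ->.
rewrite leq_eqVlt => /orP[/eqP -> //|/IHm]; apply: subset_trans.
by move=> y y_in; apply/ball_nested_step/(le_ball _ y_in); rewrite lerDl ltW.
Qed.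

Lemma nested_balls_common_point : exists l, forall n, ball (a n) (r n + r n) l.
Proof.
have a_in_ball n m : (n <= m)%N -> ball (a n) (r n) (a m).
  by move=> nm; apply: (ball_nested _ _ nm); exact: ballxx.
have /cvg_ex[l a_to_l] : cvg (a @ \oo).
  apply: cauchy_cvg; apply: cauchy_exP => e e_gt0.
  have [n rn_lt_e] := r_small _ e_gt0.
  exists (a n); exists n => // m /= nm.
  exact: (le_ball (ltW rn_lt_e) (a_in_ball _ _ nm)).
exists l => n; have [M _ aM_near_l] := cvg_ball a_to_l (r_gt0 n).
apply: ball_triangle (a_in_ball _ _ (leq_maxr M n)) _.
exact/ball_sym/aM_near_l/leq_maxl.
Qed.

End nested_balls.

Definition archimedean_field (K : numFieldType) : Prop :=
  forall e : K, 0 < e -> exists n : nat, n.+1%:R^-1 < e.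

Section Baire_archimedean.
Context {K : numFieldType} {X : completeNormedModType K}.

Lemma open_ball_subset {O : set X} {x : X} :
  open O -> O x -> exists2 e : K, 0 < e & ball x e `<=` O.
Proof. by move=> oO Ox; apply/nbhs_ballP/open_nbhs_nbhs. Qed.

Lemma dense_open_ball_subset {F : set X} (a : X) {r eps : K} :
  open F -> dense F -> 0 < r -> 0 < eps ->
  exists b s, [/\ 0 < s, s <= eps & ball b (s + s) `<=` ball a r `&` F].
Proof.
move=> oF dF r_gt0 eps_gt0.
have [b rFb] : (ball a r `&` F) !=set0.
  by apply: dF; [exists a; exact: ballxx | exact: ball_open].
have [e e_gt0 be_sub] := open_ball_subset (openI (ball_open a r) oF) rFb.
have e2_gt0 : 0 < e / 2 by rewrite divr_gt0.
have [e2_le_eps|eps_lt_e2] := real_leP (gtr0_real e2_gt0) (gtr0_real eps_gt0).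
  by exists b, (e / 2); rewrite -splitr.
exists b, eps; split => //; apply: subset_trans be_sub; apply: le_ball.
by rewrite [leRHS]splitr lerD // ltW.
Qed.

Hypothesis K_archimedean : archimedean_field K.

(* mathcomp's [Baire] is stated over a realType, which excludes complex scalars. *)
Theorem Baire_archimedean (F : (set X)^nat) :
  (forall i, open (F i) /\ dense (F i)) -> dense (\bigcap_i F i).
Proof.
move=> odF D [x Dx] oD.
have [r0 r0_gt0 r0_sub] := open_ball_subset oD Dx.
have step (nar : nat * (X * K)) : exists bs : X * K, 0 < nar.2.2 ->
    [/\ 0 < bs.2, bs.2 <= nar.1.+1%:R^-1 &
        ball bs.1 (bs.2 + bs.2) `<=` ball nar.2.1 nar.2.2 `&` F nar.1].
  case: nar => n [a r] /=; have [r_gt0|r_ngt0] := boolP (0 < r); last first.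
    by exists (a, r) => /negP.
  have [oFn dFn] := odF n.
  have n1_gt0 : 0 < n.+1%:R^-1 :> K by rewrite invr_gt0 ltr0Sn.
  have [b [s sP]] := dense_open_ball_subset a oFn dFn r_gt0 n1_gt0.
  by exists (b, s).
have [f f_step] := choice step.
pose fix balls n := if n is m.+1 then f (m, balls m) else (x, r0).
have r_gt0 n : 0 < (balls n).2.
  by elim: n => [//|n IHn]; have [] := f_step (n, balls n) IHn.
have shrink n := f_step (n, balls n) (r_gt0 n).
have r_small (e : K) : 0 < e -> exists n, (balls n).2 < e.
  move=> /K_archimedean[n n_lt_e]; exists n.+1.
  by have [_ + _] := shrink n; move/le_lt_trans; apply.
have [|l l_in] := nested_balls_common_point (fun n => (balls n).1)
  (fun n => (balls n).2) r_gt0 r_small.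
  by move=> n; have [_ _ /subset_trans] := shrink n; apply => y [].
exists l; split.
  by apply/r0_sub; have [_ _] := shrink 0; move/(_ l (l_in 1%N)) => [].
by move=> n _; have [_ _] := shrink n; move/(_ l (l_in n.+1)) => [].
Qed.

End Baire_archimedean.

Lemma subset_closure_openI {T : topologicalType} {A U O : set T} :
  U `<=` closure A -> open O -> O `&` U !=set0 -> O `&` A !=set0.
Proof.
move=> UA oO [y [Oy Uy]].
by have [a [Aa Oa]] := UA y Uy O (open_nbhs_nbhs (conj oO Oy)); exists a.
Qed.

Lemma open_addr_preimage {K : numFieldType} {V : normedModType K}
    {A : set V} {w : V} :
  open A -> open [set u | A (u + w)].
Proof.
by apply: open_comp => u _; apply: continuousD; [exact: cvg_id | exact: cvg_cst].
Qed.

Section locally_residual_differences.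
Context {K : numFieldType} {X : completeNormedModType K}.
Hypothesis K_archimedean : archimedean_field K.

Lemma Baire_in (V : set X) (F : (set X)^nat) :
  open V -> V !=set0 -> (forall n, open (F n) /\ V `<=` closure (F n)) ->
  V `&` \bigcap_n F n !=set0.
Proof.
move=> oV V0 oF.
(* Adding the exterior of V makes each W n dense in the whole space. *)
pose W n := F n `|` ~` closure V.
have oW n : open (W n).
  exact: openU (proj1 (oF n)) (closed_openC (@closed_closure _ V)).
have dW n : dense (W n).
  move=> O [y Oy] oO; have [Vy|nVy] := pselect (closure V y); last first.
    by exists y; split => //; right.
  have [a [Oa Fa]] : O `&` F n !=set0.
    apply: (subset_closure_openI (proj2 (oF n)) oO); rewrite setIC.
    exact: Vy (open_nbhs_nbhs (conj oO Oy)).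
  by exists a; split => //; left.
have [a [Va Wa]] :=
  Baire_archimedean K_archimedean W (fun n => conj (oW n) (dW n)) V V0 oV.
exists a; split => // n _.
by case: (Wa n I) => // /(_ (subset_closure Va)).
Qed.

Lemma subset_closure_shiftI (A U V : set X) (w : X) :
  open A -> open V -> U `<=` closure A -> V `<=` U ->
  (forall y, V y -> U (y - w)) -> V `<=` closure (A `&` [set u | A (u - w)]).
Proof.
move=> oA oV UA VU VwU y Vy B; rewrite nbhsE; case=> O [oO Oy] OB.
have oOV : open (O `&` V) by exact: openI.
have [g [[Og Vg] Ag]] : O `&` V `&` A !=set0.
  by apply: subset_closure_openI (subset_trans VU UA) oOV _; exists y.
have [h [[[Ohw Vhw] Ahw] Ah]] : [set u | (O `&` V `&` A) (u + w)] `&` A !=set0.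
  apply: subset_closure_openI UA (open_addr_preimage (openI oOV oA)) _.
  by exists (g - w); rewrite /= subrK; split => //; apply: VwU.
by exists (h + w); split; [split; rewrite /= ?addrK | exact: OB].
Qed.

Lemma locally_residual_scaled_difference (S : set X) (z : X) :
  locally_residual S -> z != 0 ->
  exists c a b, [/\ S a, S b, a <> b & z = c *: (a - b)].
Proof.
move=> [U [oU [[x0 Ux0] [G [GSU [[F [oF G_eq]] UG]]]]]] z_neq0; subst G.
have [r r_gt0 rU] := open_ball_subset oU Ux0.
have z_gt0 : 0 < `|z| by rewrite normr_gt0.
pose e := r / 2; have e_gt0 : 0 < e by rewrite divr_gt0.
pose t := e / 2 / `|z|; have t_gt0 : 0 < t by rewrite !divr_gt0.
pose w := t *: z.
have w_lt_e : `|w| < e.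
  by rewrite normrZ gtr0_norm // divfK ?gt_eqF // ltr_pdivrMr // ltr_pMr // ltr1n.
pose V := ball x0 e.
have VU : V `<=` U.
  by apply: subset_trans rU; apply: le_ball; rewrite [leRHS]splitr lerDl ltW.
have VwU y : V y -> U (y - w).
  move=> Vy; apply: rU; rewrite [r]splitr; apply: ball_triangle Vy _.
  by rewrite -ball_normE /ball_ /= opprB addrC subrK.
have GF n : (\bigcap_n F n) `<=` F n by move=> u /(_ n I).
have [a [Va /= Fa]] : V `&` \bigcap_n (F n `&` [set u | F n (u - w)]) !=set0.
  apply: Baire_in; [exact: ball_open | by exists x0; exact: ballxx |] => n.
  split; first exact/openI/open_addr_preimage/oF.
  apply: subset_closure_shiftI (oF n) (ball_open _ _) _ VU VwU.
  exact: subset_trans UG (closureS (GF n)).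
have Ga : (\bigcap_n F n) a by move=> n _; have [] := Fa n I.
have Gaw : (\bigcap_n F n) (a - w) by move=> n _; have [] := Fa n I.
exists t^-1, a, (a - w); split; [exact: (GSU _ Ga).1 | exact: (GSU _ Gaw).1 | |].
- move=> /eqP; rewrite eq_sym subr_eq addrC -subr_eq subrr eq_sym scaler_eq0.
  by rewrite (negbTE z_neq0) gt_eqF.
- by rewrite opprB addrC subrK scalerA mulVf ?gt_eqF // scale1r.
Qed.

End locally_residual_differences.

Lemma cvgry_pMl {K : numFieldType} {I : Type} {F : set_system I} {FF : Filter F}
    (c : K) (f : I -> K) :
  0 < c -> f x @[x --> F] --> +oo -> c * f x @[x --> F] --> +oo.
Proof.
move=> c_gt0 /cvgryPger f_oo; apply/cvgryPger => A A_real.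
have Ac_real : A / c \is Num.real by rewrite realM // realV gtr0_real.
by apply: filterS (f_oo _ Ac_real) => x; rewrite ler_pdivrMr // mulrC.
Qed.

Section scrambled_transfer.
Context {K : numFieldType} {X : normedModType K}.
Variable T : {linear X -> X}.

Lemma iter_linearB n x y : iter n T (x - y) = iter n T x - iter n T y.
Proof. by elim: n => //= n ->; rewrite linearB. Qed.

Lemma iter_linearZ n (c : K) x : iter n T (c *: x) = c *: iter n T x.
Proof. by elim: n => //= n ->; rewrite linearZ. Qed.

Lemma uniformly_LiYorke_scrambled_setT (S : set X) :
  uniformly_LiYorke_scrambled T S ->
  (forall z, z != 0 -> exists c a b, [/\ S a, S b, a <> b & z = c *: (a - b)]) ->
  uniformly_LiYorke_scrambled T setT.
Proof.
move=> [[x [y [Sx [Sy xy]]]] [p [q pq_S]]] S_spans.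
split; first by exists x, y.
exists p, q => u v _ _ uv.
have [|c [a [b [Sa Sb ab uv_eq]]]] := S_spans (u - v).
  by rewrite subr_eq0; apply/eqP.
have c_gt0 : 0 < `|c|.
  rewrite normr_gt0; apply/eqP => c0.
  by apply/uv/eqP; rewrite -subr_eq0 uv_eq c0 scale0r.
have orbit_dist n : `|iter n T u - iter n T v| = `|c| * `|iter n T a - iter n T b|.
  by rewrite -iter_linearB uv_eq iter_linearZ normrZ iter_linearB.
have [pab qab] := pq_S a b Sa Sb ab.
split; under eq_fun do rewrite orbit_dist.
- by rewrite -(mulr0 `|c|); apply: cvgMl_tmp.
- exact: cvgry_pMl.
Qed.

End scrambled_transfer.

Lemma realType_archimedean (R : realType) : archimedean_field R.
Proof.
move=> e e_gt0; exists (Num.truncn e^-1).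
by rewrite -ltf_pV2 ?posrE ?invr_gt0 // invrK truncnS_gt.
Qed.

Local Open Scope complex_scope.
Lemma complex_archimedean (R : realType) : archimedean_field R[i].
Proof.
move=> e; rewrite ltcE /= => /andP[/eqP Im_e0 Re_e_gt0].
have [n n_lt] := @realType_archimedean R _ Re_e_gt0; exists n.
have -> : e = (complex.Re e)%:C by rewrite [LHS]complexE Im_e0 mulr0 addr0.
have -> : n.+1%:R^-1 = (n.+1%:R^-1)%:C :> R[i] by rewrite fmorphV rmorph_nat.
by rewrite ltcR.
Qed.
Local Close Scope complex_scope.

Lemma locally_residual_scrambled_setT {K : numFieldType}
    {X : completeNormedModType K} (T : {linear X -> X}) (S : set X) :
  archimedean_field K -> uniformly_LiYorke_scrambled T S -> locally_residual S ->
  uniformly_LiYorke_scrambled T setT.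
Proof.
move=> K_archimedean S_scrambled S_residual.
apply: uniformly_LiYorke_scrambled_setT S_scrambled _ => z.
exact: locally_residual_scaled_difference.
Qed.

Theorem proposition3p12 (R : realType) :
  (forall (X : completeNormedModType R) (T : {linear X -> X}),
     separable_space X -> continuous T ->
     (exists S : set X, uniformly_LiYorke_scrambled T S /\ locally_residual S) ->
     uniformly_LiYorke_scrambled T setT) /\
  (forall (X : completeNormedModType R[i]) (T : {linear X -> X}),
     separable_space X -> continuous T ->
     (exists S : set X, uniformly_LiYorke_scrambled T S /\ locally_residual S) ->
     uniformly_LiYorke_scrambled T setT).
Proof.
split=> X T _ _ [S [S_scrambled S_residual]].
- exact: locally_residual_scrambled_setT (realType_archimedean R)
    S_scrambled S_residual.
- exact: locally_residual_scrambled_setT (complex_archimedean R)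
    S_scrambled S_residual.
Qed.
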